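(* Let $R$ be a finite local ring with maximal ideal $M$, and let $\chi,\eta$ be multiplicative characters of $R$. (i) Assume $\eta$ is primitive. If $\chi$ is neither trivial nor primitive, then $J(\chi,\eta)=0$; if $\chi$ is trivial and $R$ is not a field, then $J(\chi,\eta)=0$ as well. (ii) Assume $\chi$ and $\eta$ are primitive. If $R$ is not a field and $\chi\eta$ is neither trivial nor primitive, then $J(\chi,\eta)=0$. (iii) Assume $R$ admits a primitive additive character $\psi$ (with respect to which Gauss sums are taken). If $\chi\eta$ is primitive, then $G(\chi)G(\eta)=J(\chi,\eta)\,G(\chi\eta)$.
   Context: All rings are finite and commutative with identity; $R^\times$ is the unit group. A multiplicative character is a homomorphism $R^\times\to\mathbb{C}^*$; its conductor is $R$ if it is trivial, and otherwise the largest ideal $I\subseteq M$ such that it is identically $1$ on $1+I$; it is primitive if its conductor is $(0)$. An additive character $(R,+)\to\mathbb{C}^*$ is primitive if the only ideal on which it is identically $1$ is $(0)$. Gauss sum $G(\chi)=\sum_{u\in R^\times}\psi(u)\chi(u)$; Jacobi sum $J(\chi,\eta)=\sum_{u,v\in R^\times,\,u+v=1}\chi(u)\eta(v)$. *)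

(* Characters take values in algC (algebraic complex numbers);
   every character of a finite group is valued in roots of unity, so this is
   no loss compared with C^*. *)
From HB Require Import structures.
From mathcomp Require Import all_boot all_order all_algebra all_fingroup all_field.
Set Implicit Arguments. Unset Strict Implicit. Unset Printing Implicit Defensive.
Import GRing.Theory Num.Theory.
Local Open Scope ring_scope.

Section Defs.
Variable R : finComUnitRingType.

Definition is_ideal (I : {set R}) : Prop :=
  0 \in I /\ (forall x y, x \in I -> y \in I -> x + y \in I) /\
  (forall r x, x \in I -> r * x \in I).

Definition is_maximal_ideal (M : {set R}) : Prop :=
  is_ideal M /\ M != setT /\
  (forall I, is_ideal I -> M \subset I -> I = M \/ I = setT).

Definition local_with (M : {set R}) : Prop :=
  is_maximal_ideal M /\ (forall N, is_maximal_ideal N -> N = M).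

Definition is_field_ring : Prop := forall x : R, x != 0 -> x \is a GRing.unit.

Definition mult_char (chi : {unit R} -> algC) : Prop :=
  (forall u, chi u != 0) /\ (forall u v, chi (u * v)%g = chi u * chi v).

Definition trivial_char (chi : {unit R} -> algC) : Prop := forall u, chi u = 1.

Definition trivial_on (chi : {unit R} -> algC) (I : {set R}) : Prop :=
  forall x u, x \in I -> val u = 1 + x -> chi u = 1.

(* conductor is (0): chi nontrivial and the largest ideal I <= M with chi = 1
   on 1 + I is (0), i.e. every such ideal is (0). *)
Definition primitive_char (M : {set R}) (chi : {unit R} -> algC) : Prop :=
  ~ trivial_char chi /\
  (forall I, is_ideal I -> I \subset M -> trivial_on chi I -> I = [set 0]).

Definition add_char (psi : R -> algC) : Prop :=
  (forall x, psi x != 0) /\ (forall x y, psi (x + y) = psi x * psi y).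

Definition primitive_add_char (psi : R -> algC) : Prop :=
  forall I, is_ideal I -> (forall x, x \in I -> psi x = 1) -> I = [set 0].

Definition char_mul (chi eta : {unit R} -> algC) : {unit R} -> algC :=
  fun u => chi u * eta u.

Definition gauss_sum (psi : R -> algC) (chi : {unit R} -> algC) : algC :=
  \sum_(u : {unit R}) psi (val u) * chi u.

Definition jacobi_sum (chi eta : {unit R} -> algC) : algC :=
  \sum_(u : {unit R}) \sum_(v : {unit R} | val u + val v == 1) chi u * eta v.

End Defs.

From HB Require Import structures.
From mathcomp Require Import all_boot all_order all_algebra all_fingroup all_field.
From mathcomp Require Import ring.
From Stdlib Require Import Classical.
Set Implicit Arguments. Unset Strict Implicit. Unset Printing Implicit Defensive.
Import GRing.Theory.
Local Open Scope ring_scope.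

(* Extend the characters by zero to all of R, so that Jacobi and Gauss sums become sums
   over R. In a local ring the non-units are exactly M, so a character trivial on 1 + I,
   with I <= M, is constant on the cosets x + I. If eta is primitive, some u in 1 + I has
   eta u != 1; the substitution x |-> x u fixes chi (1 - x) and multiplies J(chi, eta) by
   eta u, so J(chi, eta) = 0. This is (i), with I = M when chi is trivial, and (ii) after
   the substitution x |-> x^-1, which gives J(chi, eta) = chi(-1) J((chi eta)^-1, chi).
   For (iii), a primitive theta satisfies sum_y psi(y a) theta(y) = theta(a^-1) G(theta)
   for every a; for a non-unit a both sides vanish, because some u in 1 + Ann(a) has
   theta u != 1. Writing x = y w in G(chi) G(eta) and summing over y first then leaves
   sum_w chi(w) theta((1 + w)^-1) G(theta) = J(chi, eta) G(theta), theta = chi eta. *)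

Section CharacterSums.
Variable R : finComUnitRingType.
Implicit Types (chi eta : {unit R} -> algC) (psi f : R -> algC) (x y : R).

Definition ext0 chi x : algC := if insub x is Some u then chi u else 0.

Definition char_inv chi : {unit R} -> algC := fun u => (chi u)^-1.

Lemma ext0_val chi (u : {unit R}) : ext0 chi (val u) = chi u.
Proof. by rewrite /ext0 valK. Qed.

Lemma ext0_unit chi x (xU : x \is a GRing.unit) : ext0 chi x = chi (FinRing.Unit xU).
Proof. by rewrite -ext0_val. Qed.

Lemma ext0_nonunit chi x : x \isn't a GRing.unit -> ext0 chi x = 0.
Proof. by move=> xN; rewrite /ext0 insubF //; apply/negbTE. Qed.

Lemma ext0M chi : mult_char chi -> {morph ext0 chi : x y / x * y}.
Proof.
case=> _ chiM x y.
have [xU|xN] := boolP (x \is a GRing.unit); last first.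
  by rewrite (ext0_nonunit _ xN) mul0r ext0_nonunit // unitrM negb_and xN.
have [yU|yN] := boolP (y \is a GRing.unit); last first.
  by rewrite (ext0_nonunit _ yN) mulr0 ext0_nonunit // unitrM negb_and yN orbT.
rewrite -[x * y]/(val (FinRing.Unit xU * FinRing.Unit yU)%g) ext0_val chiM.
by rewrite -(ext0_unit _ xU) -(ext0_unit _ yU).
Qed.

Lemma ext0_char_mul chi eta x : ext0 (char_mul chi eta) x = ext0 chi x * ext0 eta x.
Proof.
have [xU|xN] := boolP (x \is a GRing.unit); first by rewrite !(ext0_unit _ xU).
by rewrite !ext0_nonunit ?mulr0.
Qed.

Lemma ext0_char_inv chi x : ext0 (char_inv chi) x = (ext0 chi x)^-1.
Proof.
have [xU|xN] := boolP (x \is a GRing.unit); first by rewrite !(ext0_unit _ xU).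
by rewrite !ext0_nonunit ?invr0.
Qed.

Lemma mult_char_mul chi eta : mult_char chi -> mult_char eta -> mult_char (char_mul chi eta).
Proof.
move=> [chi0 chiM] [eta0 etaM]; split=> [u|u v]; first by rewrite mulf_neq0.
by rewrite /char_mul chiM etaM mulrACA.
Qed.

Lemma mult_char_inv chi : mult_char chi -> mult_char (char_inv chi).
Proof.
by move=> [chi0 chiM]; split=> [u|u v]; rewrite /char_inv ?invr_eq0 // chiM invfM.
Qed.

Lemma char1 chi : mult_char chi -> chi 1%g = 1.
Proof.
case=> chi0 chiM; apply: (mulfI (chi0 1%g)).
by rewrite -chiM mulg1 mulr1.
Qed.

Lemma ext0V chi : mult_char chi -> {morph ext0 chi : x / x^-1}.
Proof.
move=> chiC x; have [xU|xN] := boolP (x \is a GRing.unit); last first.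
  by rewrite invr_out // ext0_nonunit ?invr0.
rewrite -[x^-1]/(val (FinRing.Unit xU)^-1)%g ext0_val (ext0_unit _ xU).
have chi1 := char1 chiC; case: chiC => chi0 chiM; apply: (mulfI (chi0 (FinRing.Unit xU))).
by rewrite -chiM mulgV chi1 divff.
Qed.

Lemma sum_ext0_units (F : R -> algC) :
  (forall x, x \isn't a GRing.unit -> F x = 0) -> \sum_x F x = \sum_(u : {unit R}) F (val u).
Proof.
move=> F0; rewrite (bigID (fun x => x \is a GRing.unit)) /= [X in _ + X]big1 ?addr0 //.
rewrite (reindex_omap (val : {unit R} -> R) insub) => [|x xU]; last by rewrite insubT.
by apply: eq_bigl => u; rewrite (valP u) valK eqxx.
Qed.

Lemma sum_twisted_char_eq0 f chi (u : {unit R}) : mult_char chi -> chi u != 1 ->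
  (forall x, f (x * val u) = f x) -> \sum_x f x * ext0 chi x = 0.
Proof.
move=> chiC chiu1 fu; set S := \sum_x _.
have : S = chi u * S.
  rewrite /S mulr_sumr (reindex_inj (mulIr (valP u))) /=.
  by apply: eq_bigr => x _; rewrite fu ext0M // ext0_val mulrA mulrC.
move/eqP; rewrite -subr_eq0 -{1}[S]mul1r -mulrBl mulf_eq0 subr_eq0 eq_sym.
by rewrite (negbTE chiu1) => /eqP.
Qed.

Lemma sum_unit_val_eq chi x : \sum_(u : {unit R} | val u == x) chi u = ext0 chi x.
Proof.
have [xU|xN] := boolP (x \is a GRing.unit); last first.
  rewrite ext0_nonunit // big_pred0 // => u; apply: contraNF xN => /eqP <-.
  exact: valP.
by rewrite (ext0_unit _ xU) (big_pred1 (FinRing.Unit xU)) // => u; rewrite -val_eqE.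
Qed.

Lemma jacobi_sumE chi eta : jacobi_sum chi eta = \sum_x ext0 chi (1 - x) * ext0 eta x.
Proof.
rewrite [RHS](reindex_inj (inv_inj (subKr 1))) /=.
under [RHS]eq_bigr => x _ do rewrite subKr.
rewrite [RHS](sum_ext0_units (F := fun x => ext0 chi x * ext0 eta (1 - x))); last first.
  by move=> x xN; rewrite ext0_nonunit ?mul0r.
apply: eq_bigr => u _; rewrite ext0_val -sum_unit_val_eq mulr_sumr.
by apply: eq_bigl => v; rewrite [RHS]eq_sym subr_eq addrC eq_sym.
Qed.

Lemma jacobi_sumC chi eta : jacobi_sum chi eta = jacobi_sum eta chi.
Proof.
rewrite !jacobi_sumE (reindex_inj (inv_inj (subKr 1))) /=.
by apply: eq_bigr => x _; rewrite subKr mulrC.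
Qed.

Lemma gauss_sumE psi chi : gauss_sum psi chi = \sum_x psi x * ext0 chi x.
Proof.
rewrite (sum_ext0_units (F := fun x => psi x * ext0 chi x)) => [|x xN]; last first.
  by rewrite ext0_nonunit ?mulr0.
by apply: eq_bigr => u _; rewrite ext0_val.
Qed.

Lemma nontrivial_char_witness chi : ~ trivial_char chi -> exists u, chi u != 1.
Proof.
move=> chiN; case: (boolP [exists u, chi u != 1]) => [/existsP//|].
by rewrite negb_exists => /forallP chi1; case: chiN => u; apply/eqP; rewrite -[_ == _]negbK.
Qed.

Lemma jacobi_sum_inv chi eta : mult_char chi -> mult_char eta ->
  jacobi_sum chi eta = ext0 chi (-1) * jacobi_sum chi (char_inv (char_mul chi eta)).
Proof.
move=> chiC etaC; rewrite !jacobi_sumE mulr_sumr (reindex_inj invr_inj) /=.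
apply: eq_bigr => x _; rewrite ext0_char_inv ext0_char_mul.
have [xU|xN] := boolP (x \is a GRing.unit); last first.
  by rewrite invr_out // !(ext0_nonunit _ xN) !(mulr0, invr0).
have -> : 1 - x^-1 = -1 * (1 - x) * x^-1 by rewrite mulN1r opprB mulrBl mul1r divrr.
by rewrite !ext0M // !ext0V // invfM; ring.
Qed.

Lemma gauss_sum_mul psi chi eta : add_char psi -> mult_char chi ->
  gauss_sum psi chi * gauss_sum psi eta =
  \sum_w ext0 chi w * \sum_y psi (y * (1 + w)) * ext0 (char_mul chi eta) y.
Proof.
move=> [_ psiD] chiC; rewrite !gauss_sumE mulrC mulr_suml.
under [RHS]eq_bigr => w _ do rewrite mulr_sumr.
rewrite [RHS]exchange_big; apply: eq_bigr => y _ /=; rewrite ext0_char_mul.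
have [yU|yN] := boolP (y \is a GRing.unit); last first.
  by rewrite ext0_nonunit // !mulr0 mul0r big1 // => w _; rewrite !mulr0.
rewrite mulr_sumr (reindex_inj (mulrI yU)); apply: eq_bigr => w _ /=.
by rewrite mulrDr mulr1 psiD ext0M //; ring.
Qed.

Lemma jacobi_sum_shift chi eta : mult_char chi ->
  jacobi_sum chi eta = \sum_w ext0 chi w * ext0 (char_mul chi eta) (1 + w)^-1.
Proof.
move=> chiC; rewrite jacobi_sumE (reindex_inj (h := fun w => (1 + w)^-1)) /=; last first.
  by move=> a b /invr_inj /addrI.
apply: eq_bigr => w _; rewrite ext0_char_mul.
have [wU|wN] := boolP (1 + w \is a GRing.unit); last first.
  by rewrite invr_out // (ext0_nonunit eta wN) !mulr0.
have -> : 1 - (1 + w)^-1 = w * (1 + w)^-1.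
  by apply: (mulIr wU); rewrite mulrBl mulVr // mulrVK // mul1r addrAC subrr add0r.
by rewrite (ext0M chiC) mulrA.
Qed.

End CharacterSums.

Section LocalRing.
Variable R : finComUnitRingType.
Implicit Types (I J : {set R}) (x y : R) (chi eta : {unit R} -> algC).

Lemma idealD I x y : is_ideal I -> x \in I -> y \in I -> x + y \in I.
Proof. by case=> _ [ID _]; apply: ID. Qed.

Lemma idealMl I r x : is_ideal I -> x \in I -> r * x \in I.
Proof. by case=> _ [_ IM]; apply: IM. Qed.

Lemma idealN I x : is_ideal I -> x \in I -> - x \in I.
Proof. by move=> II xI; rewrite -mulN1r idealMl. Qed.

Lemma ideal1 I : is_ideal I -> 1 \in I -> I = setT.
Proof. by move=> II I1; apply/setP => x; rewrite inE -[x]mulr1 idealMl. Qed.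

Definition idealb I : bool :=
  [&& 0 \in I, [forall x in I, forall y in I, x + y \in I]
     & [forall r, forall x in I, r * x \in I]].

Lemma idealP I : reflect (is_ideal I) (idealb I).
Proof.
apply: (iffP and3P) => [[I0 /forall_inP ID /forallP IM]|[I0 [ID IM]]].
  by split=> //; split=> [x y xI|r]; [apply: (forall_inP (ID x xI)) | apply/forall_inP].
split=> //; first by apply/forall_inP => x xI; apply/forall_inP => y; exact: ID.
by apply/forallP => r; apply/forall_inP => x; exact: IM.
Qed.

Lemma maximal_ideal_exists J : is_ideal J -> 1 \notin J ->
  exists2 N, is_maximal_ideal N & J \subset N.
Proof.
move=> JI J1; pose P K := idealb K && (1 \notin K).
have [N /maxsetP [/andP [/idealP NI N1] Nmax] JN] : {N | maxset P N & J \subset N}.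
  by apply: maxset_exists; rewrite /P J1 andbT; apply/idealP.
exists N => //; split=> //; split=> [|K KI NK].
  by apply: contraNneq N1 => ->; rewrite inE.
have [K1|K1] := boolP (1 \in K); first by right; apply: ideal1.
by left; apply: Nmax => //; rewrite /P K1 andbT; apply/idealP.
Qed.

Variable M : {set R}.
Hypothesis localM : local_with M.

Lemma max_ideal : is_ideal M. Proof. by case: localM => [[]]. Qed.

Lemma one_notin_max : 1 \notin M.
Proof. by case: localM => [[MI [MT _]] _]; apply: contra MT => /(ideal1 MI) ->. Qed.

Lemma unit_notin_max x : (x \is a GRing.unit) = (x \notin M).
Proof.
apply/idP/idP => [xU|xM].
  by apply: contra one_notin_max => xM; rewrite -(mulVr xU); exact: idealMl max_ideal xM.
apply: contraR xM => xN; pose J := [set r * x | r : R].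
have JI : is_ideal J.
  split; first by apply/imsetP; exists 0; rewrite ?mul0r.
  split=> [_ _ /imsetP [r _ ->] /imsetP [s _ ->]|r _ /imsetP [s _ ->]].
    by apply/imsetP; exists (r + s); rewrite ?mulrDl.
  by apply/imsetP; exists (r * s); rewrite ?mulrA.
have J1 : 1 \notin J.
  by apply/imsetP => -[r _ r1]; apply: (negP xN); apply/unitrPr; exists r; rewrite mulrC -r1.
have [N NM JN] := maximal_ideal_exists JI J1.
rewrite -(localM.2 N NM); apply: (subsetP JN); apply/imsetP; by exists 1; rewrite ?mul1r.
Qed.

Lemma in_max_nonunit x : (x \in M) = (x \isn't a GRing.unit).
Proof. by rewrite unit_notin_max negbK. Qed.

Lemma max_neq0 : ~ is_field_ring R -> M != [set 0].
Proof.
move=> nonfield; apply/eqP => M0; apply: nonfield => x x0.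
by rewrite unit_notin_max M0 inE.
Qed.

Lemma ext0_addI chi I : mult_char chi -> is_ideal I -> I \subset M -> trivial_on chi I ->
  forall x y, y \in I -> ext0 chi (x + y) = ext0 chi x.
Proof.
move=> chiC II IM chiI x y yI.
have MI := max_ideal; have yM := subsetP IM y yI.
have [xU|xN] := boolP (x \is a GRing.unit); last first.
  rewrite -in_max_nonunit in xN.
  by rewrite !ext0_nonunit -?in_max_nonunit // idealD.
have zI : x^-1 * y \in I by apply: idealMl.
have zU : 1 + x^-1 * y \is a GRing.unit.
  rewrite unit_notin_max; apply: contra one_notin_max => zM.
  by rewrite -[1](addrK (x^-1 * y)) idealD ?idealN // (subsetP IM).
have -> : x + y = x * (1 + x^-1 * y) by rewrite mulrDr mulr1 mulVKr.
by rewrite ext0M // (ext0_unit _ zU) (chiI _ _ zI) ?mulr1.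
Qed.

Lemma primitive_char_witness eta I : primitive_char M eta -> is_ideal I -> I \subset M ->
  I != [set 0] -> exists2 u : {unit R}, eta u != 1 & val u - 1 \in I.
Proof.
case=> _ etaP II IM I0.
case: (boolP [exists u, (eta u != 1) && (val u - 1 \in I)]) => [/existsP [u /andP []]|noW].
  by exists u.
case/eqP: I0; apply: etaP => // x u xI ux; apply/eqP; apply: contraNT noW => etau.
by apply/existsP; exists u; rewrite etau ux addrC addKr.
Qed.

Lemma imprimitive_char_ideal chi : ~ trivial_char chi -> ~ primitive_char M chi ->
  exists I, [/\ is_ideal I, I \subset M, trivial_on chi I & I != [set 0]].
Proof.
move=> chiN chiNP; apply: NNPP => noI; apply: chiNP; split=> // I II IM chiI.
by apply: NNPP => I0; apply: noI; exists I; split=> //; apply/eqP.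
Qed.

Lemma jacobi_sum_eq0 chi eta I : mult_char chi -> mult_char eta ->
  primitive_char M eta -> is_ideal I -> I \subset M -> I != [set 0] ->
  trivial_on chi I -> jacobi_sum chi eta = 0.
Proof.
move=> chiC etaC etaP II IM I0 chiI.
have [u etau uI] := primitive_char_witness etaP II IM I0.
rewrite jacobi_sumE; apply: (sum_twisted_char_eq0 etaC etau) => x.
have -> : 1 - x * val u = (1 - x) + - (x * (val u - 1)) by ring.
by rewrite (ext0_addI chiC II IM chiI) // idealN // idealMl.
Qed.

Lemma primitive_char_nonunit_witness th a : primitive_char M th ->
  a \isn't a GRing.unit -> exists2 u : {unit R}, th u != 1 & val u * a = a.
Proof.
move=> thP aN; have [->|a0] := eqVneq a 0.
  by have [u thu] := nontrivial_char_witness thP.1; exists u; rewrite ?mulr0.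
pose I := [set z | z * a == 0].
have II : is_ideal I.
  split; first by rewrite inE mul0r.
  split=> [x z|r x]; rewrite !inE.
    by rewrite mulrDl => /eqP-> /eqP->; rewrite addr0.
  by rewrite -mulrA => /eqP->; rewrite mulr0.
have IM : I \subset M.
  apply/subsetP => z; rewrite inE in_max_nonunit => /eqP za.
  by apply: contra a0 => zU; rewrite -(mulKr zU a) za mulr0.
have I0 : I != [set 0].
  apply: contra aN => /eqP I0.
  have [b _ bK] : bijective (fun z => z * a).
    apply: injF_bij => z1 z2 /eqP; rewrite -subr_eq0 -mulrBl => za.
    by apply/eqP; rewrite -subr_eq0 -in_set1 -I0 inE.
  by apply/unitrP; exists (b 1); rewrite bK mulrC bK.
have [u thu uI] := primitive_char_witness thP II IM I0.
by exists u => //; move: uI; rewrite inE mulrBl mul1r subr_eq0 => /eqP.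
Qed.

Lemma sum_dilate_primitive f th a : mult_char th -> primitive_char M th ->
  \sum_y f (y * a) * ext0 th y = ext0 th a^-1 * \sum_y f y * ext0 th y.
Proof.
move=> thC thP; have [aU|aN] := boolP (a \is a GRing.unit); last first.
  have [u thu ua] := primitive_char_nonunit_witness thP aN.
  rewrite invr_out // ext0_nonunit // mul0r.
  by apply: (sum_twisted_char_eq0 thC thu) => y; rewrite -mulrA ua.
have aVU : a^-1 \is a GRing.unit by rewrite unitrV.
rewrite (reindex_inj (mulIr aVU)) mulr_sumr; apply: eq_bigr => y _ /=.
by rewrite mulrVK // ext0M // mulrA mulrC.
Qed.

Lemma gauss_sum_mul_primitive psi chi eta : add_char psi -> mult_char chi ->
  mult_char eta -> primitive_char M (char_mul chi eta) ->
  gauss_sum psi chi * gauss_sum psi eta =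
  jacobi_sum chi eta * gauss_sum psi (char_mul chi eta).
Proof.
move=> psiA chiC etaC thP; rewrite gauss_sum_mul // jacobi_sum_shift // gauss_sumE mulr_suml.
apply: eq_bigr => w _.
by rewrite (sum_dilate_primitive _ _ (mult_char_mul chiC etaC)) // mulrA.
Qed.

End LocalRing.

Theorem mainTheorem17 (R : finComUnitRingType) (M : {set R})
  (chi eta : {unit R} -> algC) :
  local_with M -> mult_char chi -> mult_char eta ->
  (* (i) *)
  (primitive_char M eta ->
     (~ trivial_char chi -> ~ primitive_char M chi -> jacobi_sum chi eta = 0) /\
     (trivial_char chi -> ~ is_field_ring R -> jacobi_sum chi eta = 0)) /\
  (* (ii) *)
  (primitive_char M chi -> primitive_char M eta -> ~ is_field_ring R ->
     ~ trivial_char (char_mul chi eta) -> ~ primitive_char M (char_mul chi eta) ->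
     jacobi_sum chi eta = 0) /\
  (* (iii) *)
  (forall psi : R -> algC, add_char psi -> primitive_add_char psi ->
     primitive_char M (char_mul chi eta) ->
     gauss_sum psi chi * gauss_sum psi eta =
       jacobi_sum chi eta * gauss_sum psi (char_mul chi eta)).
Proof.
move=> localM chiC etaC; split; [|split].
- move=> etaP; split=> [chiN chiNP|chi1 nonfield].
    have [I [II IM chiI I0]] := imprimitive_char_ideal chiN chiNP.
    exact: (jacobi_sum_eq0 localM chiC etaC etaP II IM I0).
  apply: (jacobi_sum_eq0 localM chiC etaC etaP (max_ideal localM) (subxx _)).
    exact: max_neq0.
  by move=> x u _ _; apply: chi1.
- move=> chiP etaP _ thN thNP.
  have [I [II IM thI I0]] := imprimitive_char_ideal thN thNP.
  have xiC := mult_char_inv (mult_char_mul chiC etaC).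
  rewrite jacobi_sum_inv // jacobi_sumC.
  rewrite (jacobi_sum_eq0 localM xiC chiC chiP II IM I0) ?mulr0 //.
  by move=> x u xI ux; rewrite /char_inv (thI x u xI ux) invr1.
- by move=> psi psiA _; apply: (gauss_sum_mul_primitive localM).
Qed.
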